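(* Let $E$ be a graph satisfying Condition (K), and let $v\in E^0$ support at least two distinct return paths. Then the map $\mathbb{AP}(E)\to\mathbb{AP}(E_C^v)$ given by $(H,B)\mapsto(H,B)$ if $v\notin H$ and $(H,B)\mapsto(H\cup\{u_1,u_2\},B)$ if $v\in H$ is a well-defined order isomorphism.
   Context: A graph $E=(E^0,E^1,r,s)$ consists of countable sets $E^0$ (vertices) and $E^1$ (edges) and maps $r,s\colon E^1\to E^0$. A path is a finite sequence $\mu=e_1\cdots e_n$ ($n\ge1$) of edges with $r(e_i)=s(e_{i+1})$; $s(\mu)=s(e_1)$, $r(\mu)=r(e_n)$. Write $w\ge w'$ if there is a path from $w$ to $w'$. A return path is a path $\mu=e_1\cdots e_n$ with $s(\mu)=r(\mu)$ and $r(e_i)\neq r(\mu)$ for $i<n$; a vertex $w$ supports $\mu$ if $s(\mu)=w$. $E$ satisfies Condition (K) if no vertex supports precisely one return path. A vertex is regular if it emits a finite nonzero number of edges, and an infinite emitter if it emits infinitely many. A subset $K\subseteq E^0$ is hereditary if $w\in K$ and $w\ge w'$ imply $w'\in K$, and saturated if every regular vertex $w$ all of whose emitted edges have range in $K$ lies in $K$. For hereditary saturated $H$, $H_\infty^{\mathrm{fin}}$ is the set of infinite emitters in $E^0\setminus H$ emitting a finite nonzero number of edges with range in $E^0\setminus H$. An admissible pair is $(H,B)$ with $H$ hereditary and saturated and $B\subseteq H_\infty^{\mathrm{fin}}$; $\mathbb{AP}(E)$ denotes the set of admissible pairs, partially ordered by $(H,B)\le(H',B')$ iff $H\subseteq H'$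 and $B\subseteq H'\cup B'$. The Cuntz Splice $E_C^v$ of $E$ at $v$ is the graph with vertex set $E^0\sqcup\{u_1,u_2\}$ and edge set $E^1\sqcup\{f_1,f_2,h_1,h_2,k_1,k_2\}$, old edges keeping range and source, with $f_1\colon v\to u_1$, $f_2\colon u_1\to v$, $h_1\colon u_1\to u_1$, $h_2\colon u_1\to u_2$, $k_1\colon u_2\to u_1$, $k_2\colon u_2\to u_2$ ($e\colon a\to b$ means $s(e)=a$, $r(e)=b$). *)

From Stdlib Require Import List.
Import ListNotations.


(* A graph E = (E^0, E^1, r, s). Countability is a separate predicate. *)
Record graph := Graph {
  vert : Type;
  edge : Type;
  rg : edge -> vert;
  sc : edge -> vert }.
Arguments rg {g} _.
Arguments sc {g} _.

Definition countable (T : Type) : Prop := exists f : T -> nat, forall x y, f x = f y -> x = y.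
Definition countable_graph (E : graph) : Prop := countable (vert E) /\ countable (edge E).

Section G.
Variable E : graph.

Fixpoint chain (l : list (edge E)) : Prop :=
  match l with
  | e :: ((f :: _) as t) => rg e = sc f /\ chain t
  | _ => True
  end.

Definition path_from_to (mu : list (edge E)) (w w' : vert E) : Prop :=
  mu <> [] /\ chain mu /\
  (exists e t, mu = e :: t /\ sc e = w) /\
  (exists p e, mu = p ++ [e] /\ rg e = w').

Definition geq (w w' : vert E) : Prop := exists mu, path_from_to mu w w'.

Definition return_path (w : vert E) (mu : list (edge E)) : Prop :=
  path_from_to mu w w /\
  forall p e q, mu = p ++ e :: q -> q <> [] -> rg e <> w.

Definition condK : Prop :=
  forall w, ~ (exists mu, return_path w mu /\ forall nu, return_path w nu -> nu = mu).

Definition fin_edges (P : edge E -> Prop) : Prop :=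
  exists l : list (edge E), forall e, P e -> In e l.

Definition regular (w : vert E) : Prop :=
  fin_edges (fun e => sc e = w) /\ exists e, sc e = w.

Definition infinite_emitter (w : vert E) : Prop :=
  ~ fin_edges (fun e => sc e = w).

Definition hereditary (K : vert E -> Prop) : Prop :=
  forall w w', K w -> geq w w' -> K w'.

Definition saturated (K : vert E -> Prop) : Prop :=
  forall w, regular w -> (forall e, sc e = w -> K (rg e)) -> K w.

Definition Hinf_fin (H : vert E -> Prop) (w : vert E) : Prop :=
  infinite_emitter w /\ ~ H w /\
  fin_edges (fun e => sc e = w /\ ~ H (rg e)) /\
  (exists e, sc e = w /\ ~ H (rg e)).

Definition admissible (H B : vert E -> Prop) : Prop :=
  hereditary H /\ saturated H /\ forall w, B w -> Hinf_fin H w.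

Definition ap_le (H B H' B' : vert E -> Prop) : Prop :=
  (forall w, H w -> H' w) /\ (forall w, B w -> H' w \/ B' w).

End G.

Inductive newV := u1 | u2.
Inductive newE := f1 | f2 | h1 | h2 | k1 | k2.

Section Splice.
Variables (E : graph) (v : vert E).

Definition splice_r (e : edge E + newE) : vert E + newV :=
  match e with
  | inl e => inl (rg e)
  | inr f1 => inr u1 | inr f2 => inl v
  | inr h1 => inr u1 | inr h2 => inr u2
  | inr k1 => inr u1 | inr k2 => inr u2
  end.

Definition splice_s (e : edge E + newE) : vert E + newV :=
  match e with
  | inl e => inl (sc e)
  | inr f1 => inl v | inr f2 => inr u1
  | inr h1 => inr u1 | inr h2 => inr u1
  | inr k1 => inr u2 | inr k2 => inr u2
  end.

Definition cuntz_splice : graph :=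
  @Graph (vert E + newV) (edge E + newE) splice_r splice_s.

Definition phiH (H : vert E -> Prop) (w : vert cuntz_splice) : Prop :=
  match w with
  | inl x => H x
  | inr _ => H v
  end.

Definition phiB (B : vert E -> Prop) (w : vert cuntz_splice) : Prop :=
  match w with
  | inl x => B x
  | inr _ => False
  end.

End Splice.

(** Hereditary sets are exactly the sets closed under single edges, and
    [u1], [u2] lie on a cycle through [v] in [E_C^v], so a hereditary set of
    the splice contains [u1], [u2] exactly when it contains [v]. Moreover
    [u1], [u2] are regular, and the only new edge leaving an old vertex is
    [f1 : v -> u1]; hence regularity, infinite emission, saturation and the
    sets [H_infty^fin] are the same computed in [E] or in [E_C^v]. The one
    place where [v] supporting a return path matters is saturation at [v]:
    if every edge out of [v] in the splice lands in a hereditary [K], then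
    in particular the first edge of the return path does, and following the
    path back puts [v] in [K]. *)

From Stdlib Require Import List Classical.
Import ListNotations.

Section Graphs.
Variable g : graph.

Definition edge_closed (K : vert g -> Prop) : Prop :=
  forall e, K (sc e) -> K (rg e).

Lemma chain_edge_closed (K : vert g -> Prop) :
  edge_closed K ->
  forall t e, chain g (e :: t) -> K (rg e) -> forall f, In f (e :: t) -> K (rg f).
Proof.
  intros Kcl t; induction t as [|e' t IH]; intros e Hch Ke f Hf.
  - destruct Hf as [<-|[]]; exact Ke.
  - destruct Hch as [Hre Hch]; destruct Hf as [<-|Hf].
    + exact Ke.
    + apply (IH e' Hch); [apply Kcl; rewrite <- Hre; exact Ke | exact Hf].
Qed.

Lemma path_edge_closed (K : vert g -> Prop) mu w w' e t :
  edge_closed K -> path_from_to g mu w w' -> mu = e :: t -> K (rg e) -> K w'.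
Proof.
  intros Kcl [_ [Hch [_ [p [e' [Hlast <-]]]]]] -> Ke.
  apply (chain_edge_closed K Kcl t e Hch Ke).
  rewrite Hlast; apply in_or_app; right; left; reflexivity.
Qed.

Lemma hereditary_edge_closed (K : vert g -> Prop) : hereditary g K <-> edge_closed K.
Proof.
  split.
  - intros Kher e Ke; apply (Kher (sc e)); [exact Ke|].
    exists [e]; repeat split.
    + discriminate.
    + exists e, []; auto.
    + exists [], e; auto.
  - intros Kcl w w' Kw [mu Hmu].
    pose proof Hmu as [_ [_ [[e [t [Het Hs]]] _]]].
    apply (path_edge_closed K mu w w' e t Kcl Hmu Het).
    apply Kcl; rewrite Hs; exact Kw.
Qed.

Lemma fin_edges_mono (P Q : edge g -> Prop) :
  fin_edges g P -> (forall e, Q e -> P e) -> fin_edges g Q.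
Proof. intros [l Hl] HQP; exists l; auto. Qed.

Lemma return_path_cycle w mu :
  return_path g w mu ->
  exists e, sc e = w /\ forall K, edge_closed K -> K (rg e) -> K w.
Proof.
  intros [Hmu _].
  pose proof Hmu as [_ [_ [[e [t [Het Hs]]] _]]].
  exists e; split; [exact Hs|].
  intros K Kcl; exact (path_edge_closed K mu w w e t Kcl Hmu Het).
Qed.

End Graphs.

Section Splice.
Variables (E : graph) (v : vert E).

Notation EC := (cuntz_splice E v).

Definition lift_edges (P : edge E -> Prop) (e : edge EC) : Prop :=
  match e with inl e => P e | inr _ => True end.

Definition old_edges (e : edge EC) : list (edge E) :=
  match e with inl e => [e] | inr _ => [] end.

Lemma fin_edges_lift (P : edge E -> Prop) :
  fin_edges E P -> fin_edges EC (lift_edges P).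
Proof.
  intros [l Hl]; exists (map inl l ++ map inr [f1; f2; h1; h2; k1; k2]).
  intros [e|n] He; apply in_or_app.
  - left; apply in_map, Hl, He.
  - right; destruct n; simpl; tauto.
Qed.

Lemma fin_edges_restrict (P : edge EC -> Prop) :
  fin_edges EC P -> fin_edges E (fun e => P (inl e)).
Proof.
  intros [l Hl]; exists (flat_map old_edges l).
  intros e He; apply in_flat_map; exists (inl e); simpl; auto.
Qed.

Lemma emitted_edges_lift x (e : edge EC) :
  sc e = inl x -> lift_edges (fun e' => sc e' = x) e.
Proof. destruct e as [e|[]]; simpl; [congruence | ..]; trivial. Qed.

Lemma infinite_emitter_splice x : infinite_emitter EC (inl x) <-> infinite_emitter E x.
Proof.
  unfold infinite_emitter; split; intros Hinf Hfin; apply Hinf.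
  - apply (fin_edges_mono _ _ _ (fin_edges_lift _ Hfin)), emitted_edges_lift.
  - apply (fin_edges_mono _ _ _ (fin_edges_restrict _ Hfin)); simpl; congruence.
Qed.

Lemma regular_splice x : regular E x -> regular EC (inl x).
Proof.
  intros [Hfin [e He]]; split.
  - apply (fin_edges_mono _ _ _ (fin_edges_lift _ Hfin)), emitted_edges_lift.
  - exists (inl e); simpl; congruence.
Qed.

Lemma regular_splice_inv x : x <> v -> regular EC (inl x) -> regular E x.
Proof.
  intros Hxv [Hfin [[e|[]] He]]; simpl in He; try discriminate.
  - split; [|exists e; congruence].
    apply (fin_edges_mono _ _ _ (fin_edges_restrict _ Hfin)); simpl; congruence.
  - congruence.
Qed.

Lemma new_vertex_not_infinite_emitter u : ~ infinite_emitter EC (inr u).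
Proof.
  intros Hinf; apply Hinf.
  exists (map inr [f2; h1; h2; k1; k2]).
  intros [e|[]] He; simpl in *; try discriminate; destruct u; try discriminate; tauto.
Qed.

Lemma phiH_edge_closed H : edge_closed E H -> edge_closed EC (phiH E v H).
Proof. intros Hcl [e|[]]; simpl; auto. Qed.

Lemma phiH_saturated H :
  edge_closed E H -> saturated E H -> saturated EC (phiH E v H).
Proof.
  intros Hcl Hsat [x|[]] Hreg Hall; simpl.
  - destruct (classic (x = v)) as [->|Hxv].
    + exact (Hall (inr f1) eq_refl).
    + apply Hsat; [exact (regular_splice_inv x Hxv Hreg)|].
      intros e He; exact (Hall (inl e) (f_equal inl He)).
  - exact (Hall (inr f2) eq_refl).
  - exact (Hall (inr k1) eq_refl).
Qed.

Lemma Hinf_fin_phiH H x : Hinf_fin E H x -> Hinf_fin EC (phiH E v H) (inl x).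
Proof.
  intros [Hinf [Hx [Hfin [e [He HeH]]]]]; repeat split.
  - apply infinite_emitter_splice, Hinf.
  - exact Hx.
  - apply (fin_edges_mono _ _ _ (fin_edges_lift _ Hfin)).
    intros [e'|[]] [He' HeH']; simpl in *; try split; congruence.
  - exists (inl e); simpl; split; congruence.
Qed.

Lemma phi_admissible H B : admissible E H B -> admissible EC (phiH E v H) (phiB E v B).
Proof.
  intros [Hher [Hsat HB]].
  apply hereditary_edge_closed in Hher.
  split; [|split].
  - apply hereditary_edge_closed, phiH_edge_closed, Hher.
  - apply phiH_saturated; assumption.
  - intros [x|u] Hx; [apply Hinf_fin_phiH, HB, Hx | destruct Hx].
Qed.

Lemma phi_ap_le H B H' B' :
  ap_le E H B H' B' <-> ap_le EC (phiH E v H) (phiB E v B) (phiH E v H') (phiB E v B').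
Proof.
  split; intros [HH' HB'].
  - split; intros [x|u]; simpl; auto; intros [].
  - split; intros x; [exact (HH' (inl x)) | exact (HB' (inl x))].
Qed.

Lemma phi_injective H B H' B' :
  (forall w, phiH E v H w <-> phiH E v H' w) ->
  (forall w, phiB E v B w <-> phiB E v B' w) ->
  (forall w, H w <-> H' w) /\ (forall w, B w <-> B' w).
Proof. intros HH' HB'; split; intros x; [exact (HH' (inl x)) | exact (HB' (inl x))]. Qed.

Definition restrictV (P : vert EC -> Prop) (x : vert E) : Prop := P (inl x).

Section Restriction.
Variables (e0 : edge E) (K : vert EC -> Prop).
Hypothesis e0_source : sc e0 = v.
Hypothesis e0_returns : forall K', edge_closed E K' -> K' (rg e0) -> K' v.
Hypothesis K_closed : edge_closed EC K.

Lemma restrict_edge_closed : edge_closed E (restrictV K).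
Proof. intros e; exact (K_closed (inl e)). Qed.

Lemma restrict_saturated : saturated EC K -> saturated E (restrictV K).
Proof.
  intros Ksat x Hreg Hall; unfold restrictV.
  destruct (classic (x = v)) as [->|Hxv].
  - apply (e0_returns _ restrict_edge_closed), Hall, e0_source.
  - apply Ksat; [exact (regular_splice x Hreg)|].
    intros [e|[]] He; simpl in He; try discriminate.
    + apply Hall; congruence.
    + congruence.
Qed.

Lemma restrict_Hinf_fin x : Hinf_fin EC K (inl x) -> Hinf_fin E (restrictV K) x.
Proof.
  intros [Hinf [Hx [Hfin [e [He HeK]]]]]; repeat split.
  - apply infinite_emitter_splice, Hinf.
  - exact Hx.
  - apply (fin_edges_mono _ _ _ (fin_edges_restrict _ Hfin)); simpl.
    intros e' [He' HeK']; split; [congruence | exact HeK'].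
  - destruct e as [e|[]]; simpl in He, HeK; try discriminate.
    + exists e; split; [congruence | exact HeK].
    + (* the witness is [f1], so [x = v] and [u1 ∉ K]; then also [rg e0 ∉ K] *)
      injection He as <-; exists e0; split; [exact e0_source|].
      intros He0; apply Hx, (e0_returns _ restrict_edge_closed), He0.
Qed.

Lemma phiH_restrict w : phiH E v (restrictV K) w <-> K w.
Proof.
  pose proof (K_closed (inr f1)) as Kf1; pose proof (K_closed (inr f2)) as Kf2.
  pose proof (K_closed (inr h2)) as Kh2; pose proof (K_closed (inr k1)) as Kk1.
  simpl in *; destruct w as [x|[]]; simpl; unfold restrictV; tauto.
Qed.

End Restriction.

Lemma restrict_admissible e0 K C :
  sc e0 = v -> (forall K', edge_closed E K' -> K' (rg e0) -> K' v) ->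
  admissible EC K C -> admissible E (restrictV K) (restrictV C).
Proof.
  intros He0 Hret [Kher [Ksat KC]].
  apply hereditary_edge_closed in Kher.
  split; [|split].
  - apply hereditary_edge_closed, restrict_edge_closed, Kher.
  - apply (restrict_saturated e0); assumption.
  - intros x Hx; apply (restrict_Hinf_fin e0); auto.
Qed.

Lemma phiB_restrict K C : admissible EC K C -> forall w, phiB E v (restrictV C) w <-> C w.
Proof.
  intros [_ [_ KC]] [x|u]; simpl; [reflexivity|].
  split; [intros []|intros Hu].
  apply (new_vertex_not_infinite_emitter u), (KC _ Hu).
Qed.

End Splice.

Theorem proposition2p9 (E : graph) (v : vert E) :
  countable_graph E ->
  condK E ->
  (exists mu nu, return_path E v mu /\ return_path E v nu /\ mu <> nu) ->
  (* well-defined: the image of an admissible pair is admissible in E_C^v *)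
  (forall H B, admissible E H B ->
     admissible (cuntz_splice E v) (phiH E v H) (phiB E v B)) /\
  (* order embedding: (H,B) <= (H',B') iff their images are comparable *)
  (forall H B H' B', admissible E H B -> admissible E H' B' ->
     (ap_le E H B H' B' <->
      ap_le (cuntz_splice E v) (phiH E v H) (phiB E v B) (phiH E v H') (phiB E v B'))) /\
  (* injective (sets compared extensionally) *)
  (forall H B H' B', admissible E H B -> admissible E H' B' ->
     (forall w, phiH E v H w <-> phiH E v H' w) ->
     (forall w, phiB E v B w <-> phiB E v B' w) ->
     (forall w, H w <-> H' w) /\ (forall w, B w <-> B' w)) /\
  (* surjective onto AP(E_C^v) *)
  (forall K C : vert (cuntz_splice E v) -> Prop,
     admissible (cuntz_splice E v) K C ->
     exists H B, admissible E H B /\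
       (forall w, phiH E v H w <-> K w) /\ (forall w, phiB E v B w <-> C w)).
Proof.
  intros _ _ [mu [_ [Hmu _]]].
  destruct (return_path_cycle E v mu Hmu) as [e0 [He0 Hret]].
  split; [|split; [|split]].
  - apply phi_admissible.
  - intros H B H' B' _ _; apply phi_ap_le.
  - intros H B H' B' _ _; apply phi_injective.
  - intros K C HKC; exists (restrictV E v K), (restrictV E v C).
    split; [|split].
    + exact (restrict_admissible E v e0 K C He0 Hret HKC).
    + apply (phiH_restrict E v), hereditary_edge_closed, HKC.
    + exact (phiB_restrict E v K C HKC).
Qed.
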